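(* Let $d_1,\ldots,d_n\in\mathbb C[t,u]$ be the singular factors of $\phi$ and let $\psi:\mathbb P^1\to\mathbb P^1$, $(t':u')\mapsto(\alpha t'+\beta u':\delta t'+\gamma u')$ with $\alpha\gamma-\beta\delta\ne0$, be a linear change of coordinates, with associated graded ring isomorphism $\psi^\sharp:\mathbb C[t,u]\to\mathbb C[t',u']$, $t\mapsto(\gamma t'-\beta u')/(\alpha\gamma-\beta\delta)$, $u\mapsto(\delta t'-\alpha u')/(\alpha\gamma-\beta\delta)$. Then $\psi^\sharp(d_1),\ldots,\psi^\sharp(d_n)$ are the singular factors of the parameterization $\phi\circ\psi$ of $\mathcal C$.
   Context: Let $a,b,c\in\mathbb C[s,v]$ be homogeneous of the same degree $n\ge3$, $\gcd(a,b,c)=1$, with $\phi=(a:b:c):\mathbb P^1\to\mathbb P^2$ birational onto its image $\mathcal C$. A $\mu$-basis is a homogeneous basis $p,q$ (degrees $\mu\le n-\mu$) of the free syzygy module of $(a,b,c)$; $p_\phi(s,v;t,u)=\sum_ip_i(s,v)\,\phi_i(t,u)$, $q_\phi(s,v;t,u)=\sum_iq_i(s,v)\,\phi_i(t,u)$ where $(\phi_1,\phi_2,\phi_3)=(a,b,c)$. $S_{p_\phi,q_\phi}(t,u)$ is their $n\times n$ Sylvester matrix with respect to $(s,v)$. The singular factors of $\phi$ are homogeneous $d_1,\ldots,d_n\in\mathbb C[t,u]$ such that for each $i$, $d_n^{n-i+1}\cdots d_{i+1}^2d_i$ equals (up to nonzero constant) the gcd of the $(n+1-i)$-minors of $S_{p_\phi,q_\phi}(t,u)$.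 *)

From HB Require Import structures.
From mathcomp Require Import all_boot all_order all_algebra.
Set Implicit Arguments. Unset Strict Implicit. Unset Printing Implicit Defensive.
Import Order.TTheory GRing.Theory Num.Theory.
Local Open Scope ring_scope.

(* Bivariate polynomials over F are represented as {poly {poly F}}:
   p = \sum_i (p`_i) * Y^i with p`_i in F[X].  The coefficient of X^j Y^i
   is (p`_i)`_j.  For forms in C[s,v] we take X = s, Y = v; for forms in
   C[t,u] we take X = t, Y = u. *)

Section Defs.
Variable F : fieldType.
Local Notation P := {poly {poly F}}.
Local Notation T3 := {poly {poly {poly F}}}.

Definition cst2 (c : F) : P := c%:P%:P.

Definition varX : P := ('X : {poly F})%:P.
Definition varY : P := 'X.

Definition homog (n : nat) (p : P) : Prop :=
  forall i j : nat, (p`_i)`_j != 0 -> (i + j)%N = n.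

Definition homog3 (n : nat) (g : T3) : Prop :=
  forall i j k : nat, ((g`_i)`_j)`_k != 0 -> (i + j + k)%N = n.

Definition eval2 (p : P) (x y : P) : P :=
  \sum_(i < size p) \sum_(j < size p`_i) cst2 ((p`_i)`_j) * (x ^+ j * y ^+ i).

Definition eval3 (g : T3) (x0 y0 z0 : P) : P :=
  \sum_(i < size g) \sum_(j < size g`_i) \sum_(k < size (g`_i)`_j)
     cst2 (((g`_i)`_j)`_k) * (x0 ^+ k * y0 ^+ j * z0 ^+ i).

Definition lin_sub (al be de ga : F) (p : P) : P :=
  eval2 p (cst2 al * varX + cst2 be * varY) (cst2 de * varX + cst2 ga * varY).

Definition dvd2 (x y : P) : Prop := exists z : P, y = z * x.

Definition coprime3 (phi : 'I_3 -> P) : Prop :=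
  forall g : P, (forall k, dvd2 g (phi k)) -> g \is a GRing.unit.

(* phi = (a:b:c) is birational onto its image: there is a rational map
   (g0:g1) : C ---> P^1, given by forms of the same degree in x,y,z, with
   (g0:g1) o phi = id, i.e. g_k(a,b,c) = h * (s,v)_k for some h <> 0. *)
Definition birational (phi : 'I_3 -> P) : Prop :=
  exists (e : nat) (g0 g1 : T3) (h : P),
    [/\ homog3 e g0, homog3 e g1, h != 0,
        eval3 g0 (phi 0) (phi 1) (phi 2) = h * varX &
        eval3 g1 (phi 0) (phi 1) (phi 2) = h * varY].

Definition good_param (n : nat) (phi : 'I_3 -> P) : Prop :=
  [/\ (3 <= n)%N, (forall k, homog n (phi k)), coprime3 phi & birational phi].

Definition syz (phi : 'I_3 -> P) (h : 'I_3 -> P) : Prop :=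
  \sum_(k < 3) h k * phi k = 0.

Definition mu_basis (n : nat) (phi : 'I_3 -> P) (mu : nat)
    (p q : 'I_3 -> P) : Prop :=
  [/\ (mu <= n - mu)%N,
      (forall k, homog mu (p k)) /\ (forall k, homog (n - mu) (q k)),
      syz phi p /\ syz phi q,
      (forall h, syz phi h -> exists f g : P, forall k, h k = f * p k + g * q k) &
      (forall f g : P, (forall k, f * p k + g * q k = 0) -> f = 0 /\ g = 0)].

(* coefficient of s^(m-j) v^j in p_phi(s,v;t,u) = \sum_k p_k(s,v) phi_k(t,u);
   it is an element of F[t,u]. *)
Definition pcoef (phi : 'I_3 -> P) (m : nat) (p : 'I_3 -> P) (j : nat) : P :=
  \sum_(k < 3) cst2 (((p k)`_j)`_(m - j)) * phi k.

(* n x n Sylvester matrix (w.r.t. (s,v)) of a form f of degree mu and a form g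
   of degree n - mu, given by their coefficient sequences (indexed by the
   exponent of v). *)
Definition sylvester (n mu : nat) (f g : nat -> P) : 'M[P]_n :=
  \matrix_(i < n, j < n)
    if (i < n - mu)%N then
      (if (i <= j <= i + mu)%N then f (j - i)%N else 0)
    else
      (let i' := (i - (n - mu))%N in
       if (i' <= j <= i' + (n - mu))%N then g (j - i')%N else 0).

Definition S_phi (n : nat) (phi : 'I_3 -> P) (mu : nat) (p q : 'I_3 -> P)
  : 'M[P]_n := sylvester n mu (pcoef phi mu p) (pcoef phi (n - mu) q).

Definition gcd_minors (N r : nat) (A : 'M[P]_N) (D : P) : Prop :=
  (forall f g : 'I_r -> 'I_N, dvd2 D (\det (mxsub f g A))) /\
  (forall E : P, (forall f g : 'I_r -> 'I_N, dvd2 E (\det (mxsub f g A))) ->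
     dvd2 E D).

(* d_1..d_n (here d 0 .. d (n-1)) are the singular factors of phi (w.r.t. a
   mu-basis of phi): for each i, d_n^(n-i+1) ... d_(i+1)^2 d_i is the gcd of
   the (n+1-i)-minors of S_{p_phi,q_phi}.  With 0-based i this reads
   \prod_(i <= j < n) d_j^(j-i+1) = gcd of (n-i)-minors. *)
Definition singular_factors (n : nat) (phi : 'I_3 -> P) (d : 'I_n -> P)
  : Prop :=
  exists (mu : nat) (p q : 'I_3 -> P),
    [/\ mu_basis n phi mu p q,
        (forall i, exists e, homog e (d i)) &
        (forall i : 'I_n,
           gcd_minors (n - i) (S_phi n phi mu p q)
             (\prod_(j < n | (i <= j)%N) d j ^+ (j - i).+1))].

End Defs.

Arguments singular_factors {F} n phi d.
Arguments good_param {F} n phi.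

(* The substitution psi# : p(X, Y) |-> p(al X + be Y, de X + ga Y) is a graded ring
   automorphism of F[X,Y] over F, with inverse the substitution of the inverse matrix.
   Applying it to phi and to a mu-basis (p, q) of phi yields phi o psi together with a
   mu-basis of it.  Coefficientwise, the Sylvester matrix of the new data is
   L * psi#(S) * R for constant matrices L, R: R is the matrix of psi# on forms of degree
   n - 1 in (s, v), and L is block diagonal, given by psi^-1# on the multipliers of p and q.
   By Cauchy-Binet every r-minor of L * psi#(S) * R is a combination of the images of
   r-minors of S, and symmetrically with psi^-1#; hence psi# maps the gcd of the r-minors
   of S to that of the new Sylvester matrix, and being multiplicative it carries the
   identities defining the singular factors over. *)

From HB Require Import structures.
From mathcomp Require Import all_boot all_order all_algebra.
From mathcomp Require Import perm zify ring.
Import GRing.Theory.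
Local Open Scope ring_scope.

Set Implicit Arguments. Unset Strict Implicit. Unset Printing Implicit Defensive.

Section Substitution.
Variable F : fieldType.
Local Notation P := {poly {poly F}}.

Definition cst2_rmorphism : {rmorphism F -> P} := (polyC \o polyC)%FUN.

Lemma cst2_commr (x : P) : commr_rmorph cst2_rmorphism x.
Proof. by move=> c; apply: mulrC. Qed.

Definition subst1 (x : P) : {rmorphism {poly F} -> P} := horner_morph (cst2_commr x).

Lemma subst1_commr (x y : P) : commr_rmorph (subst1 x) y.
Proof. by move=> a; apply: mulrC. Qed.

Definition subst2 (x y : P) : {rmorphism P -> P} := horner_morph (subst1_commr x y).

Lemma subst2_cst2 (x y : P) (c : F) : subst2 x y (cst2 c) = cst2 c.
Proof. by rewrite /subst2 /cst2 /= horner_morphC /subst1 /= horner_morphC. Qed.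

Lemma subst2_varX (x y : P) : subst2 x y (varX F) = x.
Proof. by rewrite /subst2 /varX /= horner_morphC /subst1 /= horner_morphX. Qed.

Lemma subst2_varY (x y : P) : subst2 x y (varY F) = y.
Proof. by rewrite /subst2 /varY /= horner_morphX. Qed.

Lemma size_map_poly_le (aR rR : nzSemiRingType) (f : aR -> rR) (p : {poly aR}) :
  (size (map_poly f p) <= size p)%N.
Proof. exact: size_poly. Qed.

Lemma eval2E (p x y : P) : eval2 p x y = subst2 x y p.
Proof.
rewrite /subst2 /= /horner_morph (horner_coef_wide _ (size_map_poly_le _ _)).
apply: eq_bigr => i _; rewrite coef_map_id0 /=; last by rewrite map_poly0 horner0.
rewrite (horner_coef_wide _ (size_map_poly_le _ _)) mulr_suml.
by apply: eq_bigr => j _; rewrite coef_map_id0 //= mulrA.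
Qed.

Lemma subst2_var (p : P) : subst2 (varX F) (varY F) p = p.
Proof.
rewrite -eval2E /eval2 -[RHS]coefK poly_def; apply: eq_bigr => i _.
rewrite -mul_polyC /varY.
under eq_bigr => j _ do rewrite mulrA.
rewrite -mulr_suml; congr (_ * _).
rewrite -[X in X%:P]coefK poly_def rmorph_sum; apply: eq_bigr => j _.
by rewrite /cst2 /varX -mul_polyC rmorphM rmorphXn.
Qed.

Lemma rmorph_subst2 (rho : {rmorphism P -> P}) (x y p : P) :
  (forall c, rho (cst2 c) = cst2 c) -> rho (varX F) = x -> rho (varY F) = y ->
  rho p = subst2 x y p.
Proof.
move=> rho_cst2 <- <-; rewrite -{1}[p]subst2_var -!eval2E /eval2 rmorph_sum.
apply: eq_bigr => i _; rewrite rmorph_sum; apply: eq_bigr => j _.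
by rewrite !rmorphM !rmorphXn rho_cst2.
Qed.

Lemma lin_subE (al be de ga : F) (p : P) :
  lin_sub al be de ga p =
  subst2 (cst2 al * varX F + cst2 be * varY F) (cst2 de * varX F + cst2 ga * varY F) p.
Proof. exact: eval2E. Qed.

Section LinSubMorphism.
Variables al be de ga : F.

Fact lin_sub_is_zmod_morphism : zmod_morphism (lin_sub al be de ga).
Proof. by move=> p q; rewrite !lin_subE rmorphB. Qed.

Fact lin_sub_is_monoid_morphism : monoid_morphism (lin_sub al be de ga).
Proof. by split=> [|p q]; rewrite !lin_subE ?rmorph1 ?rmorphM. Qed.

HB.instance Definition _ :=
  GRing.isZmodMorphism.Build P P (lin_sub al be de ga) lin_sub_is_zmod_morphism.
HB.instance Definition _ :=
  GRing.isMonoidMorphism.Build P P (lin_sub al be de ga) lin_sub_is_monoid_morphism.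

End LinSubMorphism.

Lemma lin_sub_cst2 (al be de ga c : F) : lin_sub al be de ga (cst2 c) = cst2 c.
Proof. by rewrite lin_subE subst2_cst2. Qed.

Lemma cst20 : cst2 0 = 0 :> P.
Proof. exact: (rmorph0 cst2_rmorphism). Qed.

Lemma cst2D (a b : F) : cst2 (a + b) = cst2 a + cst2 b :> P.
Proof. exact: (rmorphD cst2_rmorphism). Qed.

Lemma cst2M (a b : F) : cst2 (a * b) = cst2 a * cst2 b :> P.
Proof. exact: (rmorphM cst2_rmorphism). Qed.

Lemma lin_sub_comp (al be de ga al' be' de' ga' : F) (p : P) :
  lin_sub al' be' de' ga' (lin_sub al be de ga p) =
  lin_sub (al * al' + be * de') (al * be' + be * ga') (de * al' + ga * de')
          (de * be' + ga * ga') p.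
Proof.
rewrite !lin_subE; set outer := subst2 _ _; set inner := subst2 _ _.
apply: (@rmorph_subst2 (outer \o inner)) => [c||] /=; rewrite ?subst2_cst2 //.
- rewrite subst2_varX rmorphD !rmorphM !subst2_cst2 subst2_varX subst2_varY.
  by rewrite !cst2D !cst2M; ring.
- rewrite subst2_varY rmorphD !rmorphM !subst2_cst2 subst2_varX subst2_varY.
  by rewrite !cst2D !cst2M; ring.
Qed.

Lemma lin_sub_id (al be de ga : F) (p : P) :
  al = 1 -> be = 0 -> de = 0 -> ga = 1 -> lin_sub al be de ga p = p.
Proof.
move=> -> -> -> ->.
by rewrite lin_subE /cst2 !rmorph1 !rmorph0 !mul1r !mul0r addr0 add0r subst2_var.
Qed.

Section LinSubInverse.
Variables al be de ga : F.
Let D := al * ga - be * de.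
Hypothesis nzD : D != 0.

Lemma lin_subK :
  cancel (lin_sub al be de ga) (lin_sub (ga / D) (- be / D) (- de / D) (al / D)).
Proof.
by move=> p; rewrite lin_sub_comp lin_sub_id // /D; field.
Qed.

Lemma lin_subVK :
  cancel (lin_sub (ga / D) (- be / D) (- de / D) (al / D)) (lin_sub al be de ga).
Proof.
by move=> p; rewrite lin_sub_comp lin_sub_id // /D; field.
Qed.

End LinSubInverse.

Lemma coef2_cst2M (c : F) (h : P) a b : ((cst2 c * h)`_a)`_b = c * (h`_a)`_b.
Proof. by rewrite /cst2 !coefCM. Qed.

Lemma coef2_monoM (a b : nat) (h : P) i j :
  ((varX F ^+ a * varY F ^+ b * h)`_i)`_j =
  if (b <= i)%N && (a <= j)%N then (h`_(i - b))`_(j - a) else 0.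
Proof.
rewrite -mulrA mulrCA /varY coefXnM.
case: ltnP => Hi /=; first by rewrite coef0.
by rewrite /varX -rmorphXn coefCM coefXnM; case: ltnP.
Qed.

Lemma homog0 m : homog m (0 : P).
Proof. by move=> a b; rewrite !coef0 eqxx. Qed.

Lemma homogD m (p q : P) : homog m p -> homog m q -> homog m (p + q).
Proof.
move=> hp hq a b; rewrite !coefD.
by have [->|/hp //] := eqVneq (p`_a`_b) 0; rewrite add0r; apply: hq.
Qed.

Lemma homog_sum m (I : Type) (r : seq I) (Pr : pred I) (f : I -> P) :
  (forall i, Pr i -> homog m (f i)) -> homog m (\sum_(i <- r | Pr i) f i).
Proof. by move=> H; apply: big_ind => //; [apply: homog0 | apply: homogD]. Qed.

Lemma homog_cst2M m (c : F) (p : P) : homog m p -> homog m (cst2 c * p).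
Proof. by move=> hp a b; rewrite coef2_cst2M mulf_eq0 negb_or => /andP[_ /hp]. Qed.

Lemma homogM m k (p q : P) : homog m p -> homog k q -> homog (m + k) (p * q).
Proof.
move=> hp hq a b; apply: contraNeq => Hab.
rewrite coefM coef_sum big1 // => l _; rewrite coefM big1 // => t _.
have [->|/hp Hp] := eqVneq (p`_l`_t) 0; first by rewrite mul0r.
have [->|/hq Hq] := eqVneq (q`_(a - l)`_(b - t)) 0; first by rewrite mulr0.
by have := ltn_ord l; have := ltn_ord t; lia.
Qed.

Lemma coef2_monom (i j a b : nat) :
  ((varX F ^+ i * varY F ^+ j)`_a)`_b = ((a == j) && (b == i))%:R.
Proof.
rewrite /varX /varY -rmorphXn coefMXn /=.
have [ltaj|leja] := ltnP a j; first by rewrite coef0; case: eqP => // eaj; lia.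
rewrite coefC; case: eqP => [eaj|/eqP naj].
  have -> : a = j by lia.
  by rewrite eqxx coefXn.
by rewrite coef0; case: eqP => //; lia.
Qed.

Lemma homog_monom i j : homog (i + j) (varX F ^+ i * varY F ^+ j).
Proof.
move=> a b; rewrite coef2_monom.
case: (a =P j) => [->|_]; last by rewrite /= eqxx.
by case: (b =P i) => [-> _|_]; [rewrite addnC | rewrite /= eqxx].
Qed.

Lemma homogX m e (p : P) : homog m p -> homog (m * e) (p ^+ e).
Proof.
move=> hp; elim: e => [|e IH]; last by rewrite exprS mulnS; apply: homogM.
by rewrite expr0 muln0; have := @homog_monom 0 0; rewrite !expr0 mulr1.
Qed.

Lemma homog_lin_form (a b : F) : homog 1 (cst2 a * varX F + cst2 b * varY F).
Proof.
apply: homogD; apply: homog_cst2M.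
- by have := @homog_monom 1 0; rewrite expr1 expr0 mulr1.
- by have := @homog_monom 0 1; rewrite expr1 expr0 mul1r.
Qed.

Lemma homog_eval2 m (p x y : P) :
  homog m p -> homog 1 x -> homog 1 y -> homog m (eval2 p x y).
Proof.
move=> hp hx hy; apply: homog_sum => i _; apply: homog_sum => j _.
have [->|/hp Hij] := eqVneq ((p`_i)`_j) 0; first by rewrite cst20 mul0r; apply: homog0.
apply: homog_cst2M; rewrite -Hij addnC.
by have := homogM (homogX (e := j) hx) (homogX (e := i) hy); rewrite !mul1n.
Qed.

Lemma homog_lin_sub m (al be de ga : F) (p : P) :
  homog m p -> homog m (lin_sub al be de ga p).
Proof. by move=> hp; apply: homog_eval2 => //; apply: homog_lin_form. Qed.

End Substitution.

Lemma det_mulmx_rect (R : comPzRingType) (r N : nat) (B : 'M[R]_(r, N)) (A : 'M[R]_(N, r)) :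
  \det (B *m A) =
  \sum_(h : {ffun 'I_r -> 'I_N}) (\prod_i B i (h i)) * \det (rowsub h A).
Proof.
have prod_mulmx (s : 'S_r) : \prod_i (B *m A) i (s i) =
    \sum_(h : {ffun 'I_r -> 'I_N}) \prod_i (B i (h i) * A (h i) (s i)).
  rewrite -(bigA_distr_bigA (fun i k => B i k * A k (s i))).
  by apply: eq_bigr => i _; rewrite mxE.
rewrite /determinant; under eq_bigr => s _ do rewrite prod_mulmx mulr_sumr.
rewrite exchange_big /=; apply: eq_bigr => h _.
rewrite mulr_sumr; apply: eq_bigr => s _.
rewrite big_split /= mulrCA; congr (_ * (_ * _)).
by apply: eq_bigr => i _; rewrite mxE.
Qed.

Section Minors.
Variable F : fieldType.
Local Notation P := {poly {poly F}}.

Lemma dvd2_mull (x y c : P) : dvd2 x y -> dvd2 x (c * y).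
Proof. by case=> z ->; exists (c * z); rewrite mulrA. Qed.

Lemma dvd2_sum (I : Type) (r : seq I) (Pr : pred I) (x : P) (f : I -> P) :
  (forall i, Pr i -> dvd2 x (f i)) -> dvd2 x (\sum_(i <- r | Pr i) f i).
Proof.
move=> H; apply: big_ind => //; first by exists 0; rewrite mul0r.
by move=> _ _ [y ->] [z ->]; exists (y + z); rewrite mulrDl.
Qed.

Lemma dvd2_rmorph (sig : {rmorphism P -> P}) (x y : P) : dvd2 x y -> dvd2 (sig x) (sig y).
Proof. by case=> z ->; exists (sig z); rewrite rmorphM. Qed.

Definition dvd_minors (r N : nat) (A : 'M[P]_N) (x : P) : Prop :=
  forall f g : 'I_r -> 'I_N, dvd2 x (\det (mxsub f g A)).

Lemma dvd_minors_mull (r N : nat) (L A : 'M[P]_N) (x : P) :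
  dvd_minors r A x -> dvd_minors r (L *m A) x.
Proof.
move=> dvdA f g; rewrite mxsub_mul det_mulmx_rect.
apply: dvd2_sum => h _; apply: dvd2_mull.
have -> : rowsub h (colsub g A) = mxsub h g A by apply/matrixP => i j; rewrite !mxE.
exact: dvdA.
Qed.

Lemma dvd_minors_tr (r N : nat) (A : 'M[P]_N) (x : P) :
  dvd_minors r A x -> dvd_minors r A^T x.
Proof.
move=> dvdA f g; rewrite -det_tr.
have -> : (mxsub f g A^T)^T = mxsub g f A by apply/matrixP => i j; rewrite !mxE.
exact: dvdA.
Qed.

Lemma dvd_minors_mul (r N : nat) (L A R : 'M[P]_N) (x : P) :
  dvd_minors r A x -> dvd_minors r (L *m A *m R) x.
Proof.
move=> /(dvd_minors_mull L) /dvd_minors_tr /(dvd_minors_mull R^T) /dvd_minors_tr.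
by rewrite trmx_mul !trmxK.
Qed.

Lemma dvd_minors_map (sig : {rmorphism P -> P}) (r N : nat) (A : 'M[P]_N) (x : P) :
  dvd_minors r A x -> dvd_minors r (map_mx sig A) (sig x).
Proof. by move=> dvdA f g; rewrite -map_mxsub det_map_mx; apply/dvd2_rmorph/dvdA. Qed.

Lemma gcd_minors_rmorph (sig sig' : {rmorphism P -> P}) (sig'K : cancel sig' sig)
    (r N : nat) (A B L R L' R' : 'M[P]_N) (D : P) :
  B = L *m map_mx sig A *m R -> A = L' *m map_mx sig' B *m R' ->
  gcd_minors r A D -> gcd_minors r B (sig D).
Proof.
move=> eqB eqA [dvdD gcdD]; split=> [|E dvdE].
  by rewrite eqB; apply/dvd_minors_mul/dvd_minors_map.
rewrite -[E]sig'K; apply/dvd2_rmorph/gcdD.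
by rewrite eqA; apply/dvd_minors_mul/dvd_minors_map.
Qed.

End Minors.

Section SylvesterCoefficients.
Variable F : fieldType.
Local Notation P := {poly {poly F}}.

Definition hcoef (N : nat) (h : P) (j : nat) : F := (h`_j)`_(N - j).

Definition monom (N j : nat) : P := varX F ^+ (N - j) * varY F ^+ j.

Lemma hcoef_cst2M N c (h : P) j : hcoef N (cst2 c * h) j = c * hcoef N h j.
Proof. exact: coef2_cst2M. Qed.

Lemma hcoef_sum N (I : Type) (r : seq I) (Pr : pred I) (f : I -> P) j :
  hcoef N (\sum_(i <- r | Pr i) f i) j = \sum_(i <- r | Pr i) hcoef N (f i) j.
Proof. by rewrite /hcoef !coef_sum. Qed.

Lemma homog_monomN N j : (j <= N)%N -> homog N (monom N j).
Proof. by move=> lejN; have := @homog_monom F (N - j) j; rewrite subnK. Qed.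

Lemma homog_monomE N (h : P) : homog N h ->
  h = \sum_(j < N.+1) cst2 (hcoef N h j) * monom N j.
Proof.
move=> hh; apply/polyP => a; apply/polyP => b; rewrite !coef_sum.
under eq_bigr => j _ do rewrite coef2_cst2M /monom coef2_monom.
have [/andP[leaN /eqP eb]|] := boolP ((a <= N) && (b == N - a))%N.
  rewrite (bigD1 (Ordinal (leaN : (a < N.+1)%N))) //= big1 ?addr0.
    by rewrite /hcoef eqxx eb eqxx mulr1.
  move=> j; rewrite -val_eqE /=; case: (a =P j) => [->|_ _]; last by rewrite mulr0.
  by rewrite eqxx.
move=> notN; rewrite big1 => [|j _]; last first.
  case: (a =P j) => [eaj|_]; last by rewrite mulr0.
  case: (b =P (N - j)%N) => [ebj|_]; last by rewrite mulr0.
  by exfalso; move: notN; rewrite eaj ebj; have := ltn_ord j; lia.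
have [//|/hh hab] := eqVneq (h`_a`_b) 0.
by exfalso; move: notN; lia.
Qed.

(* Row [i] of [sylv_coef_mx N mu f g] lists the coefficients of the form
   [s^(n-mu-1-i) v^i f], resp. [s^(mu-1-i') v^i' g] with [i' = i - (n - mu)], of degree
   [N = n - 1]: this is the Sylvester matrix of [f] and [g] (see [sylv_coef_mxE]). *)
Definition sylv_mult (n mu i : nat) : P :=
  if (i < n - mu)%N then monom (n - mu - 1) i else monom (mu - 1) (i - (n - mu)).

Definition sylv_row (n mu i : nat) (f g : P) : P :=
  sylv_mult n mu i * (if (i < n - mu)%N then f else g).

Definition sylv_coef_mx (N mu : nat) (f g : P) : 'M[F]_N.+1 :=
  \matrix_(i, j) hcoef N (sylv_row N.+1 mu i f g) j.

Lemma sylv_coef_mxE N mu (f g : P) (i j : 'I_N.+1) : (mu <= N.+1)%N ->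
  sylv_coef_mx N mu f g i j =
  if (i < N.+1 - mu)%N then
    (if (i <= j <= i + mu)%N then hcoef mu f (j - i) else 0)
  else
    (let i' := (i - (N.+1 - mu))%N in
     if (i' <= j <= i' + (N.+1 - mu))%N then hcoef (N.+1 - mu) g (j - i') else 0).
Proof.
move=> lemu; have ltiN := ltn_ord i; have ltjN := ltn_ord j.
rewrite mxE /sylv_row /sylv_mult /monom /hcoef /=.
case: ifP => lti; rewrite coef2_monoM; case: ifP => h1; case: ifP => h2 //;
  first [lia | by congr (_`_ _); lia].
Qed.

Lemma S_phiE N mu (phi p q : 'I_3 -> P) : (mu <= N.+1)%N ->
  S_phi N.+1 phi mu p q =
  \sum_(k < 3) phi k *: map_mx (cst2_rmorphism F) (sylv_coef_mx N mu (p k) (q k)).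
Proof.
move=> lemu; apply/matrixP => i j; rewrite summxE !mxE /pcoef /=.
under [RHS]eq_bigr => k _ do rewrite 2!mxE sylv_coef_mxE //=.
case: (i < N.+1 - mu)%N; case: (_ <= j <= _)%N;
  by [rewrite big1 // => k _; rewrite rmorph0 mulr0 | apply: eq_bigr => k _; rewrite mulrC].
Qed.

End SylvesterCoefficients.

Arguments monom {F} N j.
Arguments sylv_mult {F} n mu i.

Section SylvesterMorphism.
Variable F : fieldType.
Local Notation P := {poly {poly F}}.
Variables sig sig' : {rmorphism P -> P}.
Hypothesis sig_cst2 : forall c, sig (cst2 c) = cst2 c.
Hypothesis homog_sig' : forall m h, homog m h -> homog m (sig' h).
Hypothesis sig'K : cancel sig' sig.

Definition subst_mx (N : nat) : 'M[F]_N.+1 :=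
  \matrix_(j, l) hcoef N (sig (monom N j)) l.

Lemma hcoef_rmorph N (h : P) (l : 'I_N.+1) : homog N h ->
  hcoef N (sig h) l = \sum_(j < N.+1) hcoef N h j * subst_mx N j l.
Proof.
move=> hh; rewrite {1}(homog_monomE hh) rmorph_sum hcoef_sum.
by apply: eq_bigr => j _; rewrite rmorphM sig_cst2 hcoef_cst2M mxE.
Qed.

Lemma rmorph_monomM K i (h : P) : (i <= K)%N ->
  sig' (monom K i) * h =
  \sum_(0 <= j < K.+1) cst2 (hcoef K (sig' (monom K i)) j) * (monom K j * h).
Proof.
move=> leiK; rewrite big_mkord {1}(homog_monomE (homog_sig' (homog_monomN leiK))).
by rewrite mulr_suml; apply: eq_bigr => j _; rewrite -mulrA.
Qed.

Definition mult_subst_coef (n mu i i2 : nat) : F :=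
  if (i < n - mu)%N then
    (if (i2 < n - mu)%N then hcoef (n - mu - 1) (sig' (monom (n - mu - 1) i)) i2 else 0)
  else
    (if (i2 < n - mu)%N then 0
     else hcoef (mu - 1) (sig' (monom (mu - 1) (i - (n - mu)))) (i2 - (n - mu))).

(* Block diagonal: the matrices of [sig'] on forms of degrees [n - mu - 1] and [mu - 1],
   the degrees of the multipliers of [f] and of [g]. *)
Definition mult_subst_mx (N mu : nat) : 'M[F]_N.+1 :=
  \matrix_(i, i2) mult_subst_coef N.+1 mu i i2.

Lemma rmorph_sylv_mult n mu (f g : P) (i : nat) : (mu <= n)%N -> (i < n)%N ->
  sig' (sylv_mult n mu i) * (if (i < n - mu)%N then f else g) =
  \sum_(i2 < n) cst2 (mult_subst_coef n mu i i2) * sylv_row n mu i2 f g.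
Proof.
move=> lemu ltiN.
rewrite -(big_mkord xpredT
  (fun i2 => cst2 (mult_subst_coef n mu i i2) * sylv_row n mu i2 f g)).
rewrite (big_cat_nat (n := n - mu)) ?leq_subr //= /sylv_mult /mult_subst_coef.
case: ifP => lti.
  rewrite rmorph_monomM; last by lia.
  have -> : (n - mu - 1)%N.+1 = (n - mu)%N by lia.
  rewrite [X in _ = _ + X]big1_seq ?addr0 => [|j]; last first.
    by rewrite mem_index_iota => /and3P[_ lej _]; rewrite ltnNge lej /= cst20 mul0r.
  apply: eq_big_nat => j /andP[_ ltj].
  by rewrite ltj /sylv_row /sylv_mult ltj.
rewrite rmorph_monomM; last by lia.
have -> : (mu - 1)%N.+1 = mu by lia.
rewrite [X in _ = X + _]big1_seq ?add0r => [|j]; last first.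
  by rewrite mem_index_iota => /and3P[_ _ ->]; rewrite cst20 mul0r.
rewrite [in RHS](big_addn 0 n (n - mu)) subKn //.
apply: eq_big_nat => j _.
by rewrite /sylv_row /sylv_mult ltnNge leq_addl /= addnK.
Qed.

Lemma homog_sylv_row N mu (f g : P) (i : 'I_N.+1) : (mu <= N.+1)%N ->
  homog mu f -> homog (N.+1 - mu) g -> homog N (sylv_row N.+1 mu i f g).
Proof.
move=> lemu hf hg; have ltiN := ltn_ord i; rewrite /sylv_row /sylv_mult.
case: ifP => lti.
  rewrite [X in homog X _](_ : N = N.+1 - mu - 1 + mu)%N; last by lia.
  by apply: homogM => //; apply: homog_monomN; lia.
rewrite [X in homog X _](_ : N = mu - 1 + (N.+1 - mu))%N; last by lia.
by apply: homogM => //; apply: homog_monomN; lia.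
Qed.

Lemma sylv_coef_mx_rmorph N mu (f g : P) : (mu <= N.+1)%N ->
  homog mu f -> homog (N.+1 - mu) g ->
  sylv_coef_mx N mu (sig f) (sig g) =
  mult_subst_mx N mu *m sylv_coef_mx N mu f g *m subst_mx N.
Proof.
move=> lemu hf hg; apply/matrixP => i l; rewrite !mxE.
have -> : sylv_row N.+1 mu i (sig f) (sig g) =
    sig (sig' (sylv_mult N.+1 mu i) * (if (i < N.+1 - mu)%N then f else g)).
  by rewrite rmorphM sig'K /sylv_row; case: ifP.
rewrite rmorph_sylv_mult // rmorph_sum hcoef_sum.
under eq_bigr => i2 _ do
  rewrite rmorphM sig_cst2 hcoef_cst2M (hcoef_rmorph _ (homog_sylv_row (i := i2) lemu hf hg)).
under [RHS]eq_bigr => j _ do rewrite mxE mulr_suml.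
rewrite exchange_big /=; apply: eq_bigr => i2 _.
by rewrite mulr_sumr; apply: eq_bigr => j _; rewrite !mxE mulrA.
Qed.

Lemma S_phi_rmorph N mu (phi p q : 'I_3 -> P) : (mu <= N.+1)%N ->
  (forall k, homog mu (p k)) -> (forall k, homog (N.+1 - mu) (q k)) ->
  S_phi N.+1 (fun k => sig (phi k)) mu (fun k => sig (p k)) (fun k => sig (q k)) =
  map_mx (cst2_rmorphism F) (mult_subst_mx N mu) *m map_mx sig (S_phi N.+1 phi mu p q)
    *m map_mx (cst2_rmorphism F) (subst_mx N).
Proof.
move=> lemu hp hq; rewrite !S_phiE // raddf_sum mulmx_sumr mulmx_suml.
apply: eq_bigr => k _; rewrite sylv_coef_mx_rmorph // !map_mxM.
rewrite /= map_mxZ scalemxAl scalemxAr; congr (_ *m (_ *: _) *m _).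
by apply/matrixP => i j; rewrite !mxE; symmetry; apply: sig_cst2.
Qed.

End SylvesterMorphism.

Section SingularFactorsMorphism.
Variable F : fieldType.
Local Notation P := {poly {poly F}}.

Lemma eq_S_phi n mu (phi phi' p p' q q' : 'I_3 -> P) :
  phi =1 phi' -> p =1 p' -> q =1 q' -> S_phi n phi mu p q = S_phi n phi' mu p' q'.
Proof.
move=> ephi ep eq; have eq_pcoef m (h h' : 'I_3 -> P) j : h =1 h' ->
    pcoef phi m h j = pcoef phi' m h' j.
  by move=> eh; apply: eq_bigr => k _; rewrite ephi eh.
by apply/matrixP => i j; rewrite !mxE /= !(eq_pcoef _ _ _ _ ep) !(eq_pcoef _ _ _ _ eq).
Qed.

Variables sig sig' : {rmorphism P -> P}.
Hypothesis sig_cst2 : forall c, sig (cst2 c) = cst2 c.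
Hypothesis sig'_cst2 : forall c, sig' (cst2 c) = cst2 c.
Hypothesis homog_sig : forall m h, homog m h -> homog m (sig h).
Hypothesis homog_sig' : forall m h, homog m h -> homog m (sig' h).
Hypothesis sigK : cancel sig sig'.
Hypothesis sig'K : cancel sig' sig.

Lemma syz_rmorph (phi h : 'I_3 -> P) :
  syz phi h -> syz (fun k => sig (phi k)) (fun k => sig (h k)).
Proof.
rewrite /syz => shi; under eq_bigr => k _ do rewrite -rmorphM.
by rewrite -rmorph_sum shi rmorph0.
Qed.

Lemma mu_basis_rmorph n (phi : 'I_3 -> P) mu (p q : 'I_3 -> P) :
  mu_basis n phi mu p q ->
  mu_basis n (fun k => sig (phi k)) mu (fun k => sig (p k)) (fun k => sig (q k)).
Proof.
case=> lemu [hp hq] [sp sq] gen indep; split=> //.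
- by split=> k; apply: homog_sig.
- by split; apply: syz_rmorph.
- move=> h shi; have /gen[f [g efg]] : syz phi (fun k => sig' (h k)).
    rewrite /syz; under eq_bigr => k _ do rewrite -[phi k]sigK -rmorphM.
    by rewrite -rmorph_sum shi rmorph0.
  by exists (sig f), (sig g) => k; rewrite -[h k]sig'K efg rmorphD !rmorphM.
- move=> f g efg; have [|f0 g0] := indep (sig' f) (sig' g).
    by move=> k; rewrite -[p k]sigK -[q k]sigK -!rmorphM -rmorphD efg rmorph0.
  by rewrite -[f]sig'K -[g]sig'K f0 g0 rmorph0.
Qed.

Lemma singular_factors_rmorph N (phi : 'I_3 -> P) (d : 'I_N.+1 -> P) :
  singular_factors N.+1 phi d ->
  singular_factors N.+1 (fun k => sig (phi k)) (fun i => sig (d i)).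
Proof.
case=> mu [p [q [mub homd gcdd]]].
exists mu, (fun k => sig (p k)), (fun k => sig (q k)); split.
- exact: mu_basis_rmorph.
- by move=> i; have [e he] := homd i; exists e; apply: homog_sig.
have [lemu' [hp hq] _ _ _] := mub; have lemu : (mu <= N.+1)%N by lia.
have hp' k : homog mu (sig (p k)) by apply: homog_sig.
have hq' k : homog (N.+1 - mu) (sig (q k)) by apply: homog_sig.
move=> i; rewrite -(eq_bigr _ (fun j _ => rmorphXn sig _ _)) -rmorph_prod.
have eqB := S_phi_rmorph sig_cst2 homog_sig' sig'K phi lemu hp hq.
have := S_phi_rmorph sig'_cst2 homog_sig sigK (fun k => sig (phi k)) lemu hp' hq'.
rewrite (eq_S_phi _ _ (fun k => sigK (phi k)) (fun k => sigK (p k)) (fun k => sigK (q k))).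
move=> eqA; exact: (gcd_minors_rmorph sig'K eqB eqA (gcdd i)).
Qed.

End SingularFactorsMorphism.

Theorem lemma3p3 (F : closedFieldType) (Fchar0 : [pchar F] =i pred0)
  (n : nat) (phi : 'I_3 -> {poly {poly F}}) (d : 'I_n -> {poly {poly F}})
  (al be de ga : F) :
  good_param n phi ->
  singular_factors n phi d ->
  al * ga - be * de != 0 ->
  singular_factors n (fun k => lin_sub al be de ga (phi k))
                     (fun i => lin_sub al be de ga (d i)).
Proof.
case: n d => [|N] d [n_ge3 _ _ _] //.
move=> sfd nzD; set D := al * ga - be * de in nzD.
apply: (singular_factors_rmorph
          (sig' := lin_sub (ga / D) (- be / D) (- de / D) (al / D))) sfd.
- exact: lin_sub_cst2.
- exact: lin_sub_cst2.
- by move=> m h; apply: (@homog_lin_sub _ m al be de ga h).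
- by move=> m h; apply: homog_lin_sub.
- exact: (lin_subK nzD).
- exact: (lin_subVK nzD).
Qed.
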